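(* Let $H$ be a complex Hilbert space and $\{\mathcal{U}(t)\}_{t\geq 0}$ a strongly continuous semigroup on $H$ with generator $\mathcal{L}$. Let $z\in D(\mathcal{L})\cap D(\mathcal{L}^\dagger)$ with $z\neq0$, $\mathcal{P}:=(\cdot,z)(z,z)^{-1}z$, $\mathcal{Q}:=1-\mathcal{P}$. Let $K:\mathbb{R}_+\to\mathbb{C}$ be the unique continuous solution of $$K(t)=(\mathcal{U}(t)\mathcal{QL}z,\mathcal{Q}\mathcal{L}^\dagger z)(z,z)^{-1}-\int_0^tK(t-s)\,(\mathcal{U}(s)z,\mathcal{Q}\mathcal{L}^\dagger z)(z,z)^{-1}\,ds,$$ and let $\eta_t:=\mathcal{U}(t)\mathcal{QL}z-\int_0^tK(t-s)\,\mathcal{U}(s)z\,ds$. Then $(\eta_t,z)=0$ for all $t\ge0$.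
   Context: The scalar product $(\cdot,\cdot)$ on $H$ is conjugate-linear in its second argument. The generator is $\mathcal{L}x:=\lim_{h\searrow 0}\frac1h[\mathcal{U}(h)x-x]$ on the set $D(\mathcal{L})$ where the limit exists; $\dagger$ denotes the adjoint. Vector-valued integrals are Bochner integrals. *)

From HB Require Import structures.
From mathcomp Require Import all_boot all_order all_algebra.
From mathcomp Require Import reals.
From mathcomp Require Import complex.

Set Implicit Arguments.
Unset Strict Implicit.
Unset Printing Implicit Defensive.

Import Order.TTheory GRing.Theory Num.Theory.
Local Open Scope ring_scope.
Local Open Scope complex_scope.

Section Defs.
Variable R : realType.
Local Notation C := R[i].

Definition cnorm (c : C) : R := Num.sqrt (complex.Re c ^+ 2 + complex.Im c ^+ 2).

Variable V : lmodType C.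
Variable ip : V -> V -> C.   (* scalar product, conjugate-linear in 2nd arg *)

Definition hnorm (x : V) : R := Num.sqrt (complex.Re (ip x x)).

Definition is_hilbert : Prop :=
  [/\ (forall a x y z, ip (a *: x + y) z = a * ip x z + ip y z),
      (forall x y, ip y x = conjc (ip x y)),
      (forall x, 0 <= complex.Re (ip x x)),
      (forall x, ip x x = 0 -> x = 0) &
      (forall u : nat -> V,
         (forall e : R, 0 < e -> exists N : nat, forall m n : nat,
             (N <= m)%N -> (N <= n)%N -> hnorm (u m - u n) < e) ->
         exists l : V, forall e : R, 0 < e -> exists N : nat, forall n : nat,
             (N <= n)%N -> hnorm (u n - l) < e)].

(* {U t}_{t>=0} is a strongly continuous semigroup of bounded linear operators
   (values of U at t < 0 are irrelevant) *)
Definition is_C0_semigroup (U : R -> V -> V) : Prop :=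
  [/\ (forall t, 0 <= t -> forall a x y, U t (a *: x + y) = a *: U t x + U t y),
      (forall t, 0 <= t -> exists M : R, forall x, hnorm (U t x) <= M * hnorm x),
      (forall x, U 0 x = x),
      (forall s t, 0 <= s -> 0 <= t -> forall x, U (s + t) x = U s (U t x)) &
      (forall x, forall e : R, 0 < e -> exists d : R, 0 < d /\
          forall h : R, 0 <= h -> h < d -> hnorm (U h x - x) < e)].

(* x \in D(L) and L x = y, where L is the generator:
   L x = lim_{h -> 0+} (U h x - x)/h *)
Definition is_gen (U : R -> V -> V) (x y : V) : Prop :=
  forall e : R, 0 < e -> exists d : R, 0 < d /\
    forall h : R, 0 < h -> h < d -> hnorm ((h^-1)%:C *: (U h x - x) - y) < e.

(* z \in D(L^dagger) and L^dagger z = w:  (L x, z) = (x, w) for all x in D(L) *)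
Definition is_adj_gen (U : R -> V -> V) (z w : V) : Prop :=
  forall x y, is_gen U x y -> ip y z = ip x w.

Definition projP (z v : V) : V := (ip v z / ip z z) *: z.
Definition projQ (z v : V) : V := v - projP z v.

(* Riemann-sum definition of the integral over [0, t] (for continuous
   integrands it agrees with the Bochner/Lebesgue integral). *)
Definition is_tagged_partition (t d : R) (n : nat) (p xi : nat -> R) : Prop :=
  [/\ p 0%N = 0, p n = t &
      forall i : nat, (i < n)%N ->
        [/\ p i <= xi i, xi i <= p i.+1 & p i.+1 - p i < d]].

Definition is_vint (g : R -> V) (t : R) (v : V) : Prop :=
  forall e : R, 0 < e -> exists d : R, 0 < d /\
    forall (n : nat) (p xi : nat -> R), is_tagged_partition t d n p xi ->
      hnorm (\sum_(i < n) ((p i.+1 - p i)%:C *: g (xi i)) - v) < e.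

End Defs.

Definition is_cint (R : realType) (g : R -> R[i]) (t : R) (v : R[i]) : Prop :=
  forall e : R, 0 < e -> exists d : R, 0 < d /\
    forall (n : nat) (p xi : nat -> R), is_tagged_partition t d n p xi ->
      cnorm (\sum_(i < n) ((p i.+1 - p i)%:C * g (xi i)) - v) < e.

Definition ccont_nonneg (R : realType) (K : R -> R[i]) : Prop :=
  forall t, 0 <= t -> forall e : R, 0 < e -> exists d : R, 0 < d /\
    forall s, 0 <= s -> `|s - t| < d -> cnorm (K s - K t) < e.

(* Put e(t) := (eta_t, z), g := (L z, z) / (z, z), h(s) := (U(s) z, z) and
   c(s) := (U(s) Q L z, z), which by adjointness also equals (U(s) z, Q L^dagger z).
   Then e = c - K * h, where * is the convolution on [0, t], and the equation
   for K reads (z, z) K = (U Q L z, Q L^dagger z) - K * c.  Differentiating,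
   with h' = (U z, L^dagger z), gives the scalar linear equation e' = g e, and
   e(0) = 0, so e vanishes.
   Everything is done from the epsilon-delta definitions: the convolution is
   differentiated through Riemann sums, uniqueness for e' = g e is a
   continuous induction with the mean value inequality, and the continuity of
   t |-> U(t) x needs local uniform boundedness of the semigroup, which comes
   from Sokal's proof of the uniform boundedness principle. *)

From HB Require Import structures.
From mathcomp Require Import all_boot all_order all_algebra.
From mathcomp Require Import reals complex.
From mathcomp Require Import boolp classical_sets.
From mathcomp Require Import ring lra.
Import Order.TTheory GRing.Theory Num.Theory.
Local Open Scope ring_scope.
Local Open Scope complex_scope.

Set Implicit Arguments.
Unset Strict Implicit.
Unset Printing Implicit Defensive.

Lemma le_div_add1_mul (R : realFieldType) (M a e : R) :
  0 <= M -> 0 <= e -> a <= e / (M + 1) -> M * a <= e.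
Proof.
move=> M0 e0 ae; apply: le_trans (ler_wpM2l M0 ae) _.
by rewrite mulrA ler_pdivrMr ?ltr_wpDl //; nra.
Qed.

Lemma lt_div_add1_mul (R : realFieldType) (M a e : R) :
  0 <= M -> 0 < e -> a < e / (M + 1) -> M * a < e.
Proof.
move=> M0 e0 ae; apply: le_lt_trans (ler_wpM2l M0 (ltW ae)) _.
by rewrite mulrA ltr_pdivrMr ?ltr_wpDl //; nra.
Qed.

Lemma ge_minl (R : realDomainType) (x y : R) : Num.min x y <= x.
Proof. by rewrite ge_min lexx. Qed.

Lemma ge_minr (R : realDomainType) (x y : R) : Num.min x y <= y.
Proof. by rewrite ge_min lexx orbT. Qed.

Lemma archi_nat (R : realType) (x : R) : exists n : nat, x < n%:R.
Proof.
exists (Num.Def.archi_bound (Num.max x 0)).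
apply: le_lt_trans (archi_boundP _); first by rewrite le_max lexx.
by rewrite le_max lexx orbT.
Qed.

Section ComplexNorm.
Variable R : realType.
Local Notation C := R[i].
Implicit Types (a b c : C) (r : R).

Lemma cnormE c : `|c| = (cnorm c)%:C.
Proof. by rewrite normc_def. Qed.

Lemma cnorm_ge0 c : 0 <= cnorm c.
Proof. by have := normr_ge0 c; rewrite cnormE lecR. Qed.

Lemma cnormD a b : cnorm (a + b) <= cnorm a + cnorm b.
Proof. by rewrite -lecR rmorphD /= -!cnormE ler_normD. Qed.

Lemma cnormM a b : cnorm (a * b) = cnorm a * cnorm b.
Proof. by apply: complexI; rewrite rmorphM /= -!cnormE normrM. Qed.

Lemma cnormN a : cnorm (- a) = cnorm a.
Proof. by apply: complexI; rewrite -!cnormE normrN. Qed.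

Lemma cnorm0 : cnorm (0 : C) = 0.
Proof. by apply: complexI; rewrite -!cnormE normr0. Qed.

Lemma cnorm_eq0 a : cnorm a = 0 -> a = 0.
Proof. by move=> h; apply/normr0_eq0; rewrite cnormE h. Qed.

Lemma cnorm_le0 a : cnorm a <= 0 -> a = 0.
Proof. by move=> h; apply: cnorm_eq0; apply/eqP; rewrite eq_le h cnorm_ge0. Qed.

Lemma cnormR r : cnorm r%:C = `|r|.
Proof. by rewrite /cnorm /= expr0n /= addr0 sqrtr_sqr. Qed.

Lemma cnorm_nat (n : nat) : cnorm (n%:R : C) = n%:R.
Proof. by rewrite -(rmorph_nat (real_complex R)) cnormR ger0_norm. Qed.

Lemma cnorm_distC a b : cnorm (a - b) = cnorm (b - a).
Proof. by rewrite -cnormN opprB. Qed.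

Lemma cnorm_sum (I : Type) (s : seq I) (P : pred I) (F : I -> C) :
  cnorm (\sum_(i <- s | P i) F i) <= \sum_(i <- s | P i) cnorm (F i).
Proof.
elim/big_rec2: _; first by rewrite cnorm0.
by move=> i y1 y2 _ h; apply: le_trans (cnormD _ _) _; rewrite lerD2l.
Qed.

Lemma Re_le_cnorm c : complex.Re c <= cnorm c.
Proof.
rewrite /cnorm; apply: le_trans (ler_norm _) _.
by rewrite -sqrtr_sqr; apply: ler_wsqrtr; rewrite lerDl sqr_ge0.
Qed.

End ComplexNorm.

Section InnerProduct.
Variable R : realType.
Local Notation C := R[i].
Variable V : lmodType C.
Variable ip : V -> V -> C.
Hypothesis hilbert : is_hilbert ip.
Local Notation hn := (hnorm ip).
Implicit Types (a : C) (x y z : V).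

Lemma ipZDl a x y z : ip (a *: x + y) z = a * ip x z + ip y z.
Proof. by case: hilbert. Qed.

Lemma ipC x y : ip y x = conjc (ip x y).
Proof. by case: hilbert. Qed.

Lemma ipDl x y z : ip (x + y) z = ip x z + ip y z.
Proof. by rewrite -[x]scale1r ipZDl mul1r scale1r. Qed.

Lemma ip0l z : ip 0 z = 0.
Proof. by apply: (addrI (ip 0 z)); rewrite -ipDl !addr0. Qed.

Lemma ipZl a x z : ip (a *: x) z = a * ip x z.
Proof. by rewrite -[a *: x]addr0 ipZDl ip0l addr0. Qed.

Lemma ipNl x z : ip (- x) z = - ip x z.
Proof. by rewrite -scaleN1r ipZl mulN1r. Qed.

Lemma ipBl x y z : ip (x - y) z = ip x z - ip y z.
Proof. by rewrite ipDl ipNl. Qed.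

Lemma ipDr x y z : ip z (x + y) = ip z x + ip z y.
Proof. by rewrite ipC ipDl rmorphD /= -!ipC. Qed.

Lemma ipZr a x z : ip z (a *: x) = conjc a * ip z x.
Proof. by rewrite ipC ipZl rmorphM /= -ipC. Qed.

Lemma ip0r z : ip z 0 = 0.
Proof. by rewrite ipC ip0l conjc0. Qed.

Lemma ipBr x y z : ip z (x - y) = ip z x - ip z y.
Proof. by rewrite ipDr -scaleN1r ipZr rmorphN1 mulN1r. Qed.

Lemma ip_suml (I : Type) (s : seq I) (P : pred I) (F : I -> V) z :
  ip (\sum_(i <- s | P i) F i) z = \sum_(i <- s | P i) ip (F i) z.
Proof.
elim/big_rec2: _; first by rewrite ip0l.
by move=> i y1 y2 _ <-; rewrite ipDl.
Qed.

Lemma hnorm_ge0 x : 0 <= hn x.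
Proof. exact: sqrtr_ge0. Qed.

(* [ip x x] is real because it equals its own conjugate. *)
Lemma ipxx x : ip x x = (hn x ^+ 2)%:C.
Proof.
have Re_ge0 : 0 <= complex.Re (ip x x) by case: hilbert.
rewrite /hnorm sqr_sqrtr //.
move: (ipC x x); case: (ip x x) => a b /= [] bN.
have /eqP : b *+ 2 = 0 by rewrite mulr2n {1}bN addNr.
by rewrite mulrn_eq0 => /eqP ->.
Qed.

Lemma ipxx_eq0 x : ip x x = 0 -> x = 0.
Proof. by case: hilbert => _ _ _ H _; apply: H. Qed.

Lemma hnorm_eq0 x : hn x = 0 -> x = 0.
Proof. by move=> h; apply: ipxx_eq0; rewrite ipxx h expr0n. Qed.

Lemma hnorm0 : hn 0 = 0.
Proof. by rewrite /hnorm ip0l /= sqrtr0. Qed.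

Lemma hnormZ a x : hn (a *: x) = cnorm a * hn x.
Proof.
have : (hn (a *: x) ^+ 2)%:C = ((cnorm a * hn x) ^+ 2)%:C.
  rewrite -ipxx ipZl ipZr ipxx mulrA -sqr_normc cnormE.
  by rewrite -!rmorphXn -rmorphM exprMn.
case=> /eqP; rewrite eqrXn2 ?mulr_ge0 ?hnorm_ge0 ?cnorm_ge0 //.
by move/eqP.
Qed.

Lemma hnorm_opp x : hn (- x) = hn x.
Proof. by rewrite -scaleN1r hnormZ cnormN (_ : 1 = 1%:C) // cnormR normr1 mul1r. Qed.

Lemma hnorm_distC x y : hn (x - y) = hn (y - x).
Proof. by rewrite -hnorm_opp opprB. Qed.

Lemma cauchy_schwarz x y : cnorm (ip x y) <= hn x * hn y.
Proof.
have [->|y0] := eqVneq y 0; first by rewrite ip0r cnorm0 hnorm0 mulr0.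
have hy0 : hn y != 0 by apply: contra y0 => /eqP /hnorm_eq0 ->.
set c := ip x y; set N := ip y y.
have NE : N = (hn y ^+ 2)%:C by rewrite /N ipxx.
have N_gt0 : 0 < N by rewrite NE ltcR exprn_gt0 // lt_def hy0 hnorm_ge0.
(* [|x - (c / N) y|^2 = |x|^2 - |c|^2 / N] is nonnegative *)
have residual : ip (x - (c / N) *: y) (x - (c / N) *: y) = ip x x - c * conjc c / N.
  rewrite !ipBl !ipBr !ipZl !ipZr -/c -/N (ipC x y) -/c.
  have -> : conjc (c / N) = conjc c / N.
    by rewrite rmorphM /= conjc_inv NE conjc_real.
  by field; rewrite lt0r_neq0.
have : c * conjc c <= ip x x * N.
  rewrite -subr_ge0.
  have -> : ip x x * N - c * conjc c = N * (ip x x - c * conjc c / N).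
    by field; rewrite lt0r_neq0.
  by apply: mulr_ge0; [exact: ltW | rewrite -residual ipxx lecR sqr_ge0].
rewrite -sqr_normc cnormE NE ipxx -!rmorphXn -rmorphM lecR -exprMn.
by rewrite ler_pXn2r // ?nnegrE ?cnorm_ge0 ?mulr_ge0 ?hnorm_ge0.
Qed.

Lemma ler_hnormD x y : hn (x + y) <= hn x + hn y.
Proof.
have sq : hn (x + y) ^+ 2 = hn x ^+ 2 + hn y ^+ 2 + complex.Re (ip x y) *+ 2.
  have : (hn (x + y) ^+ 2)%:C = (hn x ^+ 2 + hn y ^+ 2)%:C + (ip x y + conjc (ip x y)).
    by rewrite -ipxx ipDl !ipDr !ipxx (ipC x y) rmorphD /=; ring.
  by rewrite addcJ mulr_natl -rmorphMn -rmorphD => -[].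
rewrite -(ler_pXn2r (_ : 0 < 2)%N) ?nnegrE ?addr_ge0 ?hnorm_ge0 //.
rewrite sq sqrrD [in X in _ <= X]addrAC lerD2l lerMn2r /=.
exact: le_trans (Re_le_cnorm _) (cauchy_schwarz _ _).
Qed.

Lemma lerB_hnorm x y : hn x - hn y <= hn (x - y).
Proof. by rewrite lerBlDr; apply: le_trans (ler_hnormD _ _); rewrite subrK. Qed.

Lemma cnorm_ip_lt x v e : 0 < e -> hn x < e / (hn v + 1) -> cnorm (ip x v) < e.
Proof.
move=> e0 hx; apply: le_lt_trans (cauchy_schwarz _ _) _.
by rewrite mulrC; apply: lt_div_add1_mul; rewrite ?hnorm_ge0.
Qed.

End InnerProduct.

Lemma bernoulli_ineq (R : realDomainType) (h : R) (n : nat) :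
  0 <= h -> 1 + n%:R * h <= (1 + h) ^+ n.
Proof.
move=> h0; elim: n => [|n IH]; first by rewrite mul0r addr0 expr0.
rewrite exprS -natr1 mulrDl mul1r.
have : 0 <= n%:R * h * h by rewrite !mulr_ge0.
by move: IH; nra.
Qed.

Lemma exists_expr_lt (R : realType) (q e : R) :
  0 <= q -> q < 1 -> 0 < e -> exists N : nat, q ^+ N < e.
Proof.
move=> q0 q1 e0; have [->|qn0] := eqVneq q 0; first by exists 1%N; rewrite expr1.
have qp : 0 < q by rewrite lt_def qn0.
set h := q^-1 - 1.
have hp : 0 < h by rewrite /h subr_gt0 invf_gt1.
have [N HN] := archi_nat (e^-1 / h); exists N.
have qh : q^-1 = 1 + h by rewrite /h addrCA subrr addr0.
have qN : q ^+ N * (1 + N%:R * h) <= 1.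
  rewrite -[X in _ <= X](mulfV (expf_neq0 N qn0)); apply: ler_wpM2l; first exact: exprn_ge0.
  by rewrite -exprVn qh; apply: bernoulli_ineq; exact: ltW.
have Nh : 1 < e * (N%:R * h).
  by move: HN; rewrite ltr_pdivrMr // -[e^-1]mulr1 ltr_pdivrMl.
have : 0 < q ^+ N by exact: exprn_gt0.
by move: qN Nh; nra.
Qed.

Section GeometricLimit.
Variable R : realType.
Local Notation C := R[i].
Variable V : lmodType C.
Variable ip : V -> V -> C.
Hypothesis hilbert : is_hilbert ip.
Local Notation hn := (hnorm ip).

Lemma geometric_limit (x : nat -> V) (q : R) : 0 <= q -> q < 1 ->
  (forall k, hn (x k.+1 - x k) <= q ^+ k) ->
  exists l, forall k, (1 - q) * hn (l - x k) <= q ^+ k.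
Proof.
move=> q0 q1 step.
have q1p : 0 < 1 - q by rewrite subr_gt0.
have partial k m : (1 - q) * hn (x (k + m)%N - x k) <= q ^+ k - q ^+ (k + m).
  elim: m => [|m IH]; first by rewrite addn0 subrr (hnorm0 hilbert) mulr0 subrr.
  rewrite addnS -(subrK (x (k + m)%N) (x (k + m).+1)) -addrA.
  have := ler_hnormD hilbert (x (k + m).+1 - x (k + m)%N) (x (k + m)%N - x k).
  have := step (k + m)%N; rewrite exprS.
  have : 0 <= q ^+ (k + m) by exact: exprn_ge0.
  by move: IH; nra.
have tail k m : (1 - q) * hn (x (k + m)%N - x k) <= q ^+ k.
  by apply: le_trans (partial k m) _; rewrite gerDl oppr_le0 exprn_ge0.
have [l Hl] : exists l, forall e : R, 0 < e -> exists N : nat, forall n : nat,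
    (N <= n)%N -> hn (x n - l) < e.
  case: hilbert => _ _ _ _; apply => e e0.
  have eq_gt0 : 0 < e * (1 - q) / 2 by rewrite divr_gt0 ?mulr_gt0.
  have [N HN] := exists_expr_lt q0 q1 eq_gt0.
  exists N => m n /subnK <- /subnK <-; rewrite !(addnC _ N).
  rewrite -(subrK (x N) (x (N + (m - N))%N)) -[_ - x (N + _)%N]addrA.
  have := ler_hnormD hilbert (x (N + (m - N))%N - x N) (x N - x (N + (n - N))%N).
  rewrite [hn (x N - _)](hnorm_distC hilbert).
  have := tail N (m - N)%N; have := tail N (n - N)%N.
  by move: HN; nra.
exists l => k; apply/ler_addgt0Pr => e e0.
have [N HN] := Hl (e / (1 - q)) (divr_gt0 e0 q1p).
have := HN (maxn N k) (leq_maxl _ _); rewrite -(subnK (leq_maxr N k)) addnC => near.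
rewrite -(subrK (x (k + (maxn N k - k))%N) l) -addrA.
have := ler_hnormD hilbert (l - x (k + (maxn N k - k))%N) (x (k + (maxn N k - k))%N - x k).
rewrite [hn (l - _)](hnorm_distC hilbert); have := tail k (maxn N k - k)%N.
move: near; rewrite ltr_pdivlMr // => near.
by move: near; nra.
Qed.

End GeometricLimit.

Section BoundedOperator.
Variable R : realType.
Local Notation C := R[i].
Variable V : lmodType C.
Variable ip : V -> V -> C.
Hypothesis hilbert : is_hilbert ip.
Local Notation hn := (hnorm ip).
Variable T : V -> V.
Hypothesis T_linear : forall a x y, T (a *: x + y) = a *: T x + T y.
Hypothesis T_bounded : exists M, forall x, hn (T x) <= M * hn x.

Lemma linopD x y : T (x + y) = T x + T y.
Proof. by rewrite -[x]scale1r T_linear !scale1r. Qed.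

Lemma linop0 : T 0 = 0.
Proof. by apply: (addrI (T 0)); rewrite -linopD !addr0. Qed.

Lemma linopZ a x : T (a *: x) = a *: T x.
Proof. by rewrite -[a *: x]addr0 T_linear linop0 addr0. Qed.

Lemma linopB x y : T (x - y) = T x - T y.
Proof. by rewrite linopD -scaleN1r linopZ scaleN1r. Qed.

Definition opnorm : R := sup [set hn (T x) | x in [set x | hn x <= 1]].

Lemma opnorm_has_sup : has_sup [set hn (T x) | x in [set x | hn x <= 1]].
Proof.
split; first by exists (hn (T 0)), 0 => //=; rewrite (hnorm0 hilbert).
have [M HM] := T_bounded; exists `|M| => _ [x x1 <-].
apply: le_trans (HM x) _; apply: le_trans (_ : `|M| * hn x <= _).
  by apply: ler_wpM2r; [exact: hnorm_ge0 | exact: ler_norm].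
by rewrite -[X in _ <= X]mulr1; apply: ler_wpM2l.
Qed.

Lemma opnorm_ub x : hn x <= 1 -> hn (T x) <= opnorm.
Proof. by move=> x1; apply: sup_upper_bound opnorm_has_sup _ _; exists x. Qed.

Lemma opnorm_ge0 : 0 <= opnorm.
Proof. by have := @opnorm_ub 0; rewrite linop0 (hnorm0 hilbert); apply. Qed.

Lemma hnorm_linop_le x : hn (T x) <= opnorm * hn x.
Proof.
have [x0|x0] := eqVneq (hn x) 0.
  by rewrite (hnorm_eq0 hilbert x0) linop0 (hnorm0 hilbert) mulr0.
have xp : 0 < hn x by rewrite lt_def x0 hnorm_ge0.
have hx1 : cnorm ((hn x)^-1)%:C = (hn x)^-1.
  by rewrite cnormR ger0_norm // invr_ge0 hnorm_ge0.
have := @opnorm_ub (((hn x)^-1)%:C *: x).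
rewrite linopZ !(hnormZ hilbert) hx1 mulVf // lexx => /(_ isT).
by rewrite ler_pdivrMl // mulrC.
Qed.

(* Sokal's lemma: since [T xi] is the half difference of [T (x + xi)] and
   [T (x - xi)], one of [x +- xi] sees at least the norm of [T xi]. *)
Lemma sokal x r : 0 < r ->
  exists x', hn (x' - x) <= r /\ 2 / 3 * r * opnorm <= hn (T x').
Proof.
move=> r0; have [o0|opos] := leP opnorm 0.
  exists x; rewrite subrr (hnorm0 hilbert); split; first exact: ltW.
  by have := hnorm_ge0 ip (T x); nra.
have [_ [u u1 <-] Hu] := sup_adherent (divr_gt0 opos (ltr0Sn _ 2)) opnorm_has_sup.
have hr : cnorm r%:C = r by rewrite cnormR gtr0_norm.
set xi := r%:C *: u.
have hxi : hn xi <= r.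
  by rewrite (hnormZ hilbert) hr -[X in _ <= X]mulr1 ler_wpM2l // ltW.
have hTxi : 2 / 3 * r * opnorm <= hn (T xi).
  rewrite linopZ (hnormZ hilbert) hr mulrAC [X in _ <= X]mulrC ler_pM2r //.
  by move: Hu; rewrite -/opnorm; lra.
have twice : hn (T xi) *+ 2 <= hn (T (x + xi)) + hn (T (x - xi)).
  rewrite -mulr_natl -cnorm_nat -(hnormZ hilbert) scaler_nat mulr2n.
  have -> : T xi + T xi = T (x + xi) - T (x - xi).
    by rewrite linopD linopB opprB [in RHS]addrC [in RHS]addrA subrK.
  by rewrite -(hnorm_opp hilbert (T (x - xi))); exact: ler_hnormD.
have [h|h] := leP (hn (T xi)) (hn (T (x + xi))).
  by exists (x + xi); rewrite addrAC subrr add0r; split => //; exact: le_trans h.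
exists (x - xi); rewrite addrAC subrr add0r (hnorm_opp hilbert); split => //.
by apply: le_trans hTxi _; move: twice; rewrite mulr2n; lra.
Qed.

End BoundedOperator.

Section UniformBoundedness.
Variable R : realType.
Local Notation C := R[i].
Variable V : lmodType C.
Variable ip : V -> V -> C.
Hypothesis hilbert : is_hilbert ip.
Local Notation hn := (hnorm ip).
Variable T : nat -> V -> V.
Hypothesis T_linear : forall n a x y, T n (a *: x + y) = a *: T n x + T n y.
Hypothesis T_bounded : forall n, exists M, forall x, hn (T n x) <= M * hn x.

(* The orbit point is the limit of successive Sokal corrections of size [3^-n]. *)
Lemma exists_unbounded_orbit :
  (forall n, 6 * 3 ^+ n * n.+1%:R < opnorm ip (T n)) ->
  exists x, forall n, n.+1%:R < hn (T n x).
Proof.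
move=> big; set q : R := 3^-1.
have q_gt0 : 0 < q by rewrite invr_gt0.
have /choice[step stepP] : forall kx : nat * V, exists x',
    hn (x' - kx.2) <= q ^+ kx.1 /\ 2 / 3 * q ^+ kx.1 * opnorm ip (T kx.1) <= hn (T kx.1 x').
  by case=> k x; apply: (sokal hilbert (T_linear k) (T_bounded k)); exact: exprn_gt0.
pose xs := fix xs n := if n is k.+1 then step (k, xs k) else 0.
have [||l Hl] := @geometric_limit _ _ _ hilbert xs q (ltW q_gt0).
- by rewrite invf_lt1 // ltr1n.
- by move=> k; exact: (proj1 (stepP (k, xs k))).
exists l => k; have /(_ (k, xs k)) [_ /= far] := stepP.
set o := opnorm ip (T k) in far.
have o_ge0 : 0 <= o := opnorm_ge0 hilbert (T_linear k) (T_bounded k).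
have near : hn (T k (xs k.+1) - T k l) <= o * (q ^+ k / 2).
  rewrite -(linopB (T_linear k)).
  apply: le_trans (hnorm_linop_le hilbert (T_linear k) (T_bounded k) _) _.
  apply: ler_wpM2l => //; rewrite (hnorm_distC hilbert).
  by have := Hl k.+1; rewrite exprS /q; lra.
have := lerB_hnorm hilbert (T k (xs k.+1)) (T k l).
have q3 : q ^+ k * 3 ^+ k = 1 by rewrite /q exprVn mulVf // expf_neq0 // pnatr_eq0.
have : 6 * 3 ^+ k * k.+1%:R * q ^+ k < o * q ^+ k.
  by rewrite ltr_pM2r; [exact: big | exact: exprn_gt0].
have -> : 6 * 3 ^+ k * k.+1%:R * q ^+ k = 6 * k.+1%:R.
  by rewrite -[RHS]mulr1 -[X in _ = _ * X]q3; ring.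
by move: far near; nra.
Qed.

End UniformBoundedness.

Section Semigroup.
Variable R : realType.
Local Notation C := R[i].
Variable V : lmodType C.
Variable ip : V -> V -> C.
Hypothesis hilbert : is_hilbert ip.
Local Notation hn := (hnorm ip).
Variable U : R -> V -> V.
Hypothesis semigroup : is_C0_semigroup ip U.

Lemma U_linear t : 0 <= t -> forall a x y, U t (a *: x + y) = a *: U t x + U t y.
Proof. by case: semigroup => H _ _ _ _ t0; apply: H. Qed.

Lemma U_bounded t : 0 <= t -> exists M, forall x, hn (U t x) <= M * hn x.
Proof. by case: semigroup => _ H _ _ _; apply: H. Qed.

Lemma U_at0 x : U 0 x = x.
Proof. by case: semigroup => _ _ H _ _; apply: H. Qed.

Lemma U_add s t x : 0 <= s -> 0 <= t -> U (s + t) x = U s (U t x).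
Proof. by case: semigroup => _ _ _ H _ s0 t0; apply: H. Qed.

Lemma U_right_cont0 x e : 0 < e -> exists d, 0 < d /\
  forall h, 0 <= h -> h < d -> hn (U h x - x) < e.
Proof. by case: semigroup => _ _ _ _ H; apply: H. Qed.

(* Otherwise there are times [t_k <= 1 / (k + 1)] with [|U t_k|] growing fast
   enough for an orbit [U t_k x] to be unbounded, against strong continuity at 0. *)
Lemma U_bounded_near0 : exists d M, 0 < d /\
  forall t, 0 <= t -> t <= d -> forall x, hn (U t x) <= M * hn x.
Proof.
apply: contrapT => unbounded.
have /choice[tk tkP] : forall k : nat, exists t,
    [/\ 0 <= t, t <= k.+1%:R^-1 & 6 * 3 ^+ k * k.+1%:R < opnorm ip (U t)].
  move=> k; apply: contrapT => hk; apply: unbounded.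
  exists k.+1%:R^-1, (6 * 3 ^+ k * k.+1%:R); split; first by rewrite invr_gt0.
  move=> t t0 t1 x.
  apply: le_trans (hnorm_linop_le hilbert (U_linear t0) (U_bounded t0) x) _.
  apply: ler_wpM2r; first exact: hnorm_ge0.
  by rewrite leNgt; apply/negP => h; apply: hk; exists t.
have tk_ge0 k : 0 <= tk k by case: (tkP k).
have [l Hl] := exists_unbounded_orbit hilbert (fun k => U_linear (tk_ge0 k))
  (fun k => U_bounded (tk_ge0 k)) (fun k => let: And3 _ _ big := tkP k in big).
have [d [d0 Hd]] := U_right_cont0 l ltr01.
have [k] := archi_nat (Num.max d^-1 (hn l + 1)); rewrite gt_max => /andP[kd kl].
have [t0 t1 _] := tkP k.
have tk_lt_d : tk k < d.
  apply: le_lt_trans t1 _; rewrite -[d]invrK ltf_pV2 ?posrE ?invr_gt0 //.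
  by apply: lt_trans kd _; rewrite ltr_nat.
have := Hd _ t0 tk_lt_d; have := lerB_hnorm hilbert (U (tk k) l) l.
have := Hl k; have : (k%:R : R) < k.+1%:R by rewrite ltr_nat.
lra.
Qed.

Lemma U_bounded_on T : exists M, 0 <= M /\
  forall t, 0 <= t -> t <= T -> forall x, hn (U t x) <= M * hn x.
Proof.
have [d [M [d0 HM]]] := U_bounded_near0.
have {}HM t : 0 <= t -> t <= d -> forall x, hn (U t x) <= `|M| * hn x.
  move=> t0 t1 x; apply: le_trans (HM t t0 t1 x) _.
  by apply: ler_wpM2r; [exact: hnorm_ge0 | exact: ler_norm].
suff steps n : exists Mn, 0 <= Mn /\
    forall t, 0 <= t -> t <= n%:R * d -> forall x, hn (U t x) <= Mn * hn x.
  have [n Hn] := archi_nat (T / d); have [Mn [Mn0 HMn]] := steps n.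
  exists Mn; split => // t t0 tT x; apply: HMn => //.
  by apply: le_trans tT _; rewrite -ler_pdivrMr // ltW.
elim: n => [|n [Mn [Mn0 HMn]]].
  exists 1; split => // t t0; rewrite mul0r => t1 x.
  have -> : t = 0 by apply/eqP; rewrite eq_le t1 t0.
  by rewrite U_at0 mul1r.
exists (`|M| + Mn * `|M|); split; first by rewrite addr_ge0 ?mulr_ge0.
move=> t t0 t1 x.
have Mx_ge0 : 0 <= `|M| * hn x by rewrite mulr_ge0 ?hnorm_ge0.
have [td|td] := leP t d.
  by apply: le_trans (HM t t0 td x) _; rewrite mulrDl lerDl -mulrA mulr_ge0.
have td0 : 0 <= t - d by rewrite subr_ge0 ltW.
have tdn : t - d <= n%:R * d by move: t1; rewrite -natr1 mulrDl mul1r -lerBlDr.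
rewrite -(subrK d t) (U_add _ td0 (ltW d0)); apply: le_trans (HMn _ td0 tdn _) _.
apply: le_trans (ler_wpM2l Mn0 (HM d (ltW d0) (lexx d) x)) _.
by rewrite mulrDl -mulrA lerDr.
Qed.

Lemma U_continuous x t : 0 <= t -> forall e, 0 < e -> exists d, 0 < d /\
  forall s, 0 <= s -> `|s - t| < d -> hn (U s x - U t x) < e.
Proof.
move=> t0 e e0; have [M [M0 HM]] := U_bounded_on t.
have [d [d0 Hd]] := U_right_cont0 x (divr_gt0 e0 (ltr_wpDl M0 ltr01)).
exists d; split => // s s0 hs.
wlog st : s t s0 t0 hs HM / t <= s.
  move=> sym; have [|ts] := leP t s; first exact: sym.
  rewrite (hnorm_distC hilbert); apply: sym => //; first by rewrite distrC.
  move=> r r0 rs; apply: HM r0 (le_trans rs (ltW ts)).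
  exact: ltW.
have st0 : 0 <= s - t by rewrite subr_ge0.
rewrite -(subrKC t s) (U_add _ t0 st0) -(linopB (U_linear t0)).
apply: le_lt_trans (HM _ t0 (lexx t) _) _; apply: lt_div_add1_mul => //.
by apply: Hd; rewrite ?subr_ge0 // -(ger0_norm (_ : 0 <= s - t)) ?subr_ge0.
Qed.

Lemma is_gen_U x y t : is_gen ip U x y -> 0 <= t -> is_gen ip U (U t x) (U t y).
Proof.
move=> gen t0 e e0; have [M HM] := U_bounded t0.
have [d [d0 Hd]] := gen _ (divr_gt0 e0 (ltr_wpDl (normr_ge0 M) ltr01)).
exists d; split => // h h0 hd.
have -> : (h^-1)%:C *: (U h (U t x) - U t x) - U t y =
    U t ((h^-1)%:C *: (U h x - x) - y).
  rewrite -(U_add _ (ltW h0) t0) [h + t]addrC (U_add _ t0 (ltW h0)).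
  by rewrite !(linopB (U_linear t0)) (linopZ (U_linear t0)) (linopB (U_linear t0)).
apply: le_lt_trans (HM _) _; apply: le_lt_trans (ler_wpM2r (hnorm_ge0 _ _) (ler_norm M)) _.
exact: lt_div_add1_mul (Hd h h0 hd).
Qed.

End Semigroup.

Lemma le0_of_le_div_exp2 (R : realType) (r B : R) :
  (forall k : nat, r <= B / 2 ^+ k) -> r <= 0.
Proof.
move=> small; have [B0|Bp] := leP B 0.
  by apply: le_trans (small 0%N) _; rewrite expr0 divr1.
apply/ler_addgt0Pr => e e0; rewrite add0r.
have half_lt1 : 2^-1 < 1 :> R by rewrite invf_lt1 // ltr1n.
have half_ge0 : 0 <= 2^-1 :> R by rewrite invr_ge0.
have [k Hk] := exists_expr_lt half_ge0 half_lt1 (divr_gt0 e0 Bp).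
apply: le_trans (small k) _; rewrite -exprVn mulrC -ler_pdivlMr //.
exact: ltW.
Qed.

Section RealFunctions.
Variable R : realType.
Local Notation C := R[i].
Implicit Types (f g : R -> C).

Lemma continuous_induction (a b : R) (G : R -> Prop) : a <= b ->
  (forall x, a <= x -> x <= b -> (forall y, a <= y -> y < x -> G y) ->
     exists d, 0 < d /\ forall y, a <= y -> y < x + d -> G y) -> G b.
Proof.
move=> ab step.
pose S := [set x : R | [/\ a <= x, x <= b & forall y, a <= y -> y < x -> G y]]%classic.
have Sa : S a by split => // y ay ya; move: (le_lt_trans ay ya); rewrite ltxx.
have S_sup : has_sup S by split; [exists a | exists b => x []].
set s := sup S.
have a_s : a <= s by exact: sup_upper_bound S_sup _ Sa.
have s_b : s <= b by apply: ge_sup; [exists a | move=> x []].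
have Gs : forall y, a <= y -> y < s -> G y.
  move=> y ay ys; have sy : 0 < s - y by rewrite subr_gt0.
  have [z [_ _ Hz] zy] := sup_adherent sy S_sup.
  by apply: Hz => //; rewrite opprB addrCA subrr addr0 in zy.
have [d [d0 Hd]] := step s a_s s_b Gs.
have [sb|bs] := ltP s b; last by apply: Hd => //; rewrite (le_lt_trans bs) // ltrDl.
have : S (Num.min (s + d / 2) b).
  split; first by rewrite le_min ab andbT (le_trans a_s) // lerDl divr_ge0 // ltW.
    by rewrite ge_min lexx orbT.
  move=> y ay; rewrite lt_min => /andP[yd _]; apply: Hd => //.
  by apply: lt_trans yd _; rewrite ltrD2l ltr_pdivrMr // ltr_pMr // ltr1n.
move/(sup_upper_bound S_sup); rewrite ge_min => /orP[|]; last by rewrite leNgt sb.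
by rewrite -lerBrDl subrr; move: d0; lra.
Qed.

Lemma ccont_left_le f (c : C) (r a x : R) : ccont_nonneg f -> 0 <= a -> a < x ->
  (forall y, a <= y -> y < x -> cnorm (f y - c) <= r) -> cnorm (f x - c) <= r.
Proof.
move=> cf a0 ax le_r; apply/ler_addgt0Pr => e e0.
have [d [d0 Hd]] := cf x (le_trans a0 (ltW ax)) _ e0.
set y := Num.max a (x - d / 2).
have ay : a <= y by rewrite le_max lexx.
have yx : y < x by rewrite gt_max ax gtrBl divr_gt0.
have yxd : `|y - x| < d.
  rewrite ltr_norml; apply/andP; split; last by move: yx d0; lra.
  have : x - d / 2 <= y by rewrite le_max lexx orbT.
  by move: d0; lra.
have := Hd y (le_trans a0 ay) yxd; have := le_r y ay yx.
have := cnormD (f x - f y) (f y - c); rewrite addrA subrK cnorm_distC.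
lra.
Qed.

Lemma ccont_unif f T : ccont_nonneg f -> 0 <= T ->
  forall e : R, 0 < e -> exists d, 0 < d /\ forall s t, 0 <= s -> s <= T ->
    0 <= t -> t <= T -> `|s - t| < d -> cnorm (f s - f t) < e.
Proof.
move=> cf T0 e e0.
pose G y := exists d, 0 < d /\ forall s t, 0 <= s -> s <= y ->
    0 <= t -> t <= y -> `|s - t| < d -> cnorm (f s - f t) < e.
suff [d [d0 Hd]] : G T by exists d.
apply: continuous_induction T0 _ => x x0 xT below.
have [d0 [d00 Hd0]] := cf x x0 _ (divr_gt0 e0 (ltr0Sn _ 1)).
set y0 := x - d0 / 2.
have [d1 [d10 Hd1]] : G y0.
  have [y00|y00] := leP 0 y0; first by apply: below => //; rewrite /y0 gtrBl divr_gt0.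
  by exists 1; split => // s t s0 sy; move: (le_lt_trans (le_trans s0 sy) y00); rewrite ltxx.
exists (d0 / 2); split; first by rewrite divr_gt0.
move=> y _ yx; exists (Num.min d1 (d0 / 2)); split; first by rewrite lt_min d10 divr_gt0.
move=> s t s0 sy t0 ty; rewrite lt_min => /andP[st1 st2].
have close u v : 0 <= u -> 0 <= v -> `|u - x| < d0 / 2 -> `|u - v| < d0 / 2 ->
    cnorm (f u - f v) < e.
  move=> u0 v0 ux uv; have vx : `|v - x| < d0.
    by have := ler_normD (v - u) (u - x); rewrite addrA subrK (distrC v u); move: ux uv; lra.
  have ux' : `|u - x| < d0 by move: ux d00; lra.
  rewrite -(subrK (f x) (f u)) -addrA -opprB; apply: le_lt_trans (cnormD _ _) _.
  by rewrite cnormN !(cnorm_distC (f x)); have := Hd0 u u0 ux'; have := Hd0 v v0 vx; lra.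
have near_x u : y0 < u -> u <= y -> `|u - x| < d0 / 2.
  by move=> yu uy; rewrite ltr_norml; apply/andP; split; move: yu uy yx; rewrite /y0; lra.
have [sy0|ys] := leP s y0; last by apply: close; rewrite ?near_x.
have [ty0|yt] := leP t y0; first exact: Hd1.
by rewrite cnorm_distC; apply: close; rewrite ?near_x // distrC.
Qed.

Lemma ccont_bounded f T : ccont_nonneg f -> 0 <= T ->
  exists B, 0 <= B /\ forall s, 0 <= s -> s <= T -> cnorm (f s) <= B.
Proof.
move=> cf T0.
pose G y := exists B, 0 <= B /\ forall s, 0 <= s -> s <= y -> cnorm (f s) <= B.
apply: (@continuous_induction 0 T G) T0 _ => x x0 _ below.
have [d [d0 Hd]] := cf x x0 _ ltr01.
set y0 := x - d / 2.
have [B0 [B00 HB0]] : G y0.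
  have [y00|y00] := leP 0 y0; first by apply: below => //; rewrite /y0 gtrBl divr_gt0.
  by exists 0; split => // s s0 sy; move: (le_lt_trans (le_trans s0 sy) y00); rewrite ltxx.
exists (d / 2); split; first by rewrite divr_gt0.
move=> y _ yx; exists (B0 + (cnorm (f x) + 1)); split.
  by rewrite !addr_ge0 ?cnorm_ge0.
move=> s s0 sy; have [sy0|ys] := leP s y0.
  by apply: le_trans (HB0 s s0 sy0) _; rewrite lerDl addr_ge0 ?cnorm_ge0.
have sx : `|s - x| < d.
  by rewrite ltr_norml; apply/andP; split; move: ys sy yx d0; rewrite /y0; lra.
have := Hd _ s0 sx; have := cnormD (f s - f x) (f x); rewrite subrK.
by move: B00; lra.
Qed.

Definition is_rderiv f g := forall t, 0 <= t -> forall e : R, 0 < e ->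
  exists d, 0 < d /\ forall h, 0 < h -> h < d ->
    cnorm ((h^-1)%:C * (f (t + h) - f t) - g t) < e.

Lemma ccont_lin f g (a : C) : ccont_nonneg f -> ccont_nonneg g ->
  ccont_nonneg (fun s => a * f s + g s).
Proof.
move=> cf cg t t0 e e0.
have e2 : 0 < e / 2 by rewrite divr_gt0.
have a1 : 0 < cnorm a + 1 by rewrite ltr_wpDl ?cnorm_ge0.
have [d1 [d10 H1]] := cf t t0 _ (divr_gt0 e2 a1).
have [d2 [d20 H2]] := cg t t0 _ e2.
exists (Num.min d1 d2); split; first by rewrite lt_min d10 d20.
move=> s s0; rewrite lt_min => /andP[s1 s2].
rewrite (_ : _ - _ = a * (f s - f t) + (g s - g t)); last by ring.
apply: le_lt_trans (cnormD _ _) _; rewrite cnormM.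
have := lt_div_add1_mul (cnorm_ge0 a) e2 (H1 s s0 s1).
by have := H2 s s0 s2; lra.
Qed.

Lemma rderiv_lin f f' g g' (a : C) : is_rderiv f f' -> is_rderiv g g' ->
  is_rderiv (fun s => a * f s + g s) (fun s => a * f' s + g' s).
Proof.
move=> df dg t t0 e e0.
have e2 : 0 < e / 2 by rewrite divr_gt0.
have a1 : 0 < cnorm a + 1 by rewrite ltr_wpDl ?cnorm_ge0.
have [d1 [d10 H1]] := df t t0 _ (divr_gt0 e2 a1).
have [d2 [d20 H2]] := dg t t0 _ e2.
exists (Num.min d1 d2); split; first by rewrite lt_min d10 d20.
move=> h h0; rewrite lt_min => /andP[h1 h2].
rewrite (_ : _ - _ = a * ((h^-1)%:C * (f (t + h) - f t) - f' t) +
  ((h^-1)%:C * (g (t + h) - g t) - g' t)); last by ring.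
apply: le_lt_trans (cnormD _ _) _; rewrite cnormM.
have := lt_div_add1_mul (cnorm_ge0 a) e2 (H1 h h0 h1).
by have := H2 h h0 h2; lra.
Qed.

Lemma ccont_id : ccont_nonneg (fun s : R => s%:C).
Proof. by move=> t _ e e0; exists e; split => // s _; rewrite -rmorphB cnormR. Qed.

Lemma rderiv_id : is_rderiv (fun s : R => s%:C) (fun _ => 1).
Proof.
move=> t _ e e0; exists 1; split => // h h0 _.
by rewrite -rmorphB /= addrAC subrr add0r -rmorphM mulVf ?gt_eqF // subrr cnorm0.
Qed.

Lemma ccont_eq f f' : ccont_nonneg f -> (forall t, 0 <= t -> f t = f' t) ->
  ccont_nonneg f'.
Proof.
move=> cf E t t0 e e0; have [d [d0 H]] := cf t t0 e e0.
by exists d; split => // s s0 st; rewrite -!E //; apply: H.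
Qed.

Lemma rderiv_eq f g f' g' : is_rderiv f g ->
  (forall t, 0 <= t -> f t = f' t) -> (forall t, 0 <= t -> g t = g' t) ->
  is_rderiv f' g'.
Proof.
move=> df Ef Eg t t0 e e0; have [d [d0 H]] := df t t0 e e0.
exists d; split => // h h0 hd; have th : 0 <= t + h by rewrite addr_ge0 // ltW.
by rewrite -Eg // -(Ef _ th) -(Ef _ t0); exact: H.
Qed.

Lemma cnorm_le_of_quotient (h e : R) (D c : C) : 0 < h ->
  cnorm ((h^-1)%:C * D - c) < e -> cnorm D <= h * (cnorm c + e).
Proof.
move=> h0 H.
have -> : D = h%:C * ((h^-1)%:C * D - c) + h%:C * c.
  by rewrite mulrBr addrNK mulrA -rmorphM /= mulfV ?gt_eqF // mul1r.
apply: le_trans (cnormD _ _) _; rewrite !cnormM cnormR gtr0_norm //.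
by rewrite mulrDr addrC lerD2l ler_pM2l // ltW.
Qed.

Lemma rderiv_mean_value f g (a b L : R) : ccont_nonneg f -> is_rderiv f g ->
  0 <= a -> a <= b -> 0 <= L -> (forall x, a <= x -> x < b -> cnorm (g x) <= L) ->
  cnorm (f b - f a) <= L * (b - a).
Proof.
move=> cf df a0 ab L0 g_le.
apply/ler_addgt0Pr => e0 e00.
pose e := e0 / (b - a + 1).
have ba1 : 0 < b - a + 1 by rewrite ltr_wpDl // subr_ge0.
have e_gt0 : 0 < e by rewrite divr_gt0.
pose G y := y <= b -> cnorm (f y - f a) <= (L + e) * (y - a) + e.
suff /(_ (lexx b)) : G b.
  have : e * (b - a + 1) = e0 by rewrite /e divfK ?gt_eqF.
  by move: ab; nra.
apply: (@continuous_induction a b G) ab _ => x ax xb below.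
have Gx : cnorm (f x - f a) <= (L + e) * (x - a) + e.
  have [xa|ax'] := leP x a.
    have -> : x = a by apply/eqP; rewrite eq_le xa ax.
    by rewrite !subrr cnorm0 mulr0 add0r ltW.
  apply: ccont_left_le cf a0 ax' _ => y ay yx.
  apply: le_trans (below y ay yx (ltW (lt_le_trans yx xb))) _.
  rewrite lerD2r; apply: ler_wpM2l; first by rewrite addr_ge0 // ltW.
  by rewrite lerD2r ltW.
have [xb'|bx] := ltP x b; last first.
  exists 1; split => // y ay yx1 yb.
  have [yx|xy] := ltP y x; first exact: below.
  by have -> : y = x by apply/eqP; rewrite eq_le (le_trans yb bx) xy.
have [d [d0 Hd]] := df x (le_trans a0 ax) _ e_gt0.
exists d; split => // y ay yd yb.
have [yx|xy] := ltP y x; first exact: below.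
have [yx'|xy'] := leP y x; first by have -> : y = x by apply/eqP; rewrite eq_le xy yx'.
have h0 : 0 < y - x by rewrite subr_gt0.
have := Hd (y - x) h0; rewrite ltrBlDl subrKC => /(_ yd) Hq.
have Df := cnorm_le_of_quotient h0 Hq.
have := cnormD (f y - f x) (f x - f a); rewrite addrA subrK.
have := g_le x ax xb'; move: Gx Df; nra.
Qed.

Lemma rderiv_unif f g T : 0 <= T -> ccont_nonneg f -> ccont_nonneg g ->
  is_rderiv f g -> forall e : R, 0 < e -> exists d, 0 < d /\
  forall s eta, 0 <= s -> s + eta <= T -> 0 < eta -> eta < d ->
    cnorm (f (s + eta) - f s - eta%:C * g s) <= e * eta.
Proof.
move=> T0 cf cg df e e0; have [d [d0 Hd]] := ccont_unif cg T0 e0.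
exists d; split => // s eta s0 sT eta0 etad.
(* the mean value inequality for [r |-> f r - g s * r] *)
have cf' : ccont_nonneg (fun r => - g s * r%:C + f r) by exact: ccont_lin ccont_id cf.
have df' := rderiv_lin (- g s) rderiv_id df.
have g_le r : s <= r -> r < s + eta -> cnorm (- g s * 1 + g r) <= e.
  move=> sr rs; rewrite mulr1 addrC; apply: ltW; apply: Hd.
  - exact: le_trans s0 sr.
  - by move: rs sT; lra.
  - exact: s0.
  - by move: sT eta0; lra.
  by rewrite ger0_norm ?subr_ge0 //; move: rs etad; lra.
have sle : s <= s + eta by rewrite lerDl ltW.
have := rderiv_mean_value cf' df' s0 sle (ltW e0) g_le.
have -> : s + eta - s = eta by rewrite addrC addKr.
by rewrite (_ : _ - _ = f (s + eta) - f s - eta%:C * g s) // rmorphD /=; ring.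
Qed.

Lemma rderiv_linear_eq0 (e : R -> C) (b : C) : ccont_nonneg e ->
  is_rderiv e (fun t => b * e t) -> e 0 = 0 -> forall t, 0 <= t -> e t = 0.
Proof.
move=> ce de e00 t t0.
pose G y := forall s, 0 <= s -> s <= y -> e s = 0.
suff : G t by apply.
apply: (@continuous_induction 0 t G) t0 _ => x x0 _ below.
have e_lt_x s : 0 <= s -> s < x -> e s = 0.
  by move=> s0 sx; apply: (below s s0 sx s s0 (lexx s)).
have ex0 : e x = 0.
  have [x_le0|xp] := leP x 0; first by have -> : x = 0 by apply/eqP; rewrite eq_le x_le0 x0.
  apply: cnorm_le0; rewrite -[e x]subr0; apply: ccont_left_le ce (lexx 0) xp _ => y y0 yx.
  by rewrite e_lt_x // subr0 cnorm0.
have e_le_x s : 0 <= s -> s <= x -> e s = 0.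
  by move=> s0; rewrite le_eqVlt => /orP[/eqP -> //|]; exact: e_lt_x.
set c := cnorm b; have c0 : 0 <= c := cnorm_ge0 b.
(* the mean value inequality over a step of length [del] halves any bound on [e] *)
set del := (2 * c + 2)^-1.
have del0 : 0 < del by rewrite invr_gt0; lra.
have c_del : c * del <= 1 / 2 by rewrite /del ler_pdivrMr; lra.
have [B [B0 HB]] := ccont_bounded ce (addr_ge0 x0 (ltW del0)).
have halving k : forall s, 0 <= s -> s <= x + del -> cnorm (e s) <= B / 2 ^+ k.
  elim: k => [|k IH] s s0 sxd; first by rewrite expr0 divr1; exact: HB.
  have [sx|xs] := leP s x; first by rewrite e_le_x // cnorm0 divr_ge0 // exprn_ge0.
  set w := B / 2 ^+ k; have w0 : 0 <= w by rewrite divr_ge0 // exprn_ge0.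
  have g_le r : x <= r -> r < s -> cnorm (b * e r) <= c * w.
    move=> xr rs; rewrite cnormM; apply: ler_wpM2l => //.
    by apply: IH; [exact: le_trans xr | exact: le_trans (ltW rs) sxd].
  have := rderiv_mean_value ce de x0 (ltW xs) (mulr_ge0 c0 w0) g_le.
  rewrite ex0 subr0 => /le_trans; apply.
  have -> : B / 2 ^+ k.+1 = w / 2 by rewrite /w exprS invfM; ring.
  have := ler_wpM2l (mulr_ge0 c0 w0) (_ : s - x <= del); rewrite lerBlDl => /(_ sxd).
  by have := ler_wpM2r w0 c_del; lra.
exists del; split => // y _ yd s s0 sy.
apply: cnorm_le0; apply: le0_of_le_div_exp2 => k; apply: halving => //.
exact: le_trans sy (ltW yd).
Qed.

End RealFunctions.

Section RiemannSums.
Variable R : realType.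
Local Notation C := R[i].
Implicit Types (t d B : R) (n : nat) (p xi : nat -> R) (f g : R -> C) (I J : C).

Definition Rsum n p xi f : C := \sum_(i < n) ((p i.+1 - p i)%:C * f (xi i)).

Lemma tpart_step t d n p xi i : is_tagged_partition t d n p xi -> (i < n)%N ->
  [/\ p i <= xi i, xi i <= p i.+1 & p i.+1 - p i < d].
Proof. by case=> _ _; apply. Qed.

Lemma tpart_mono t d n p xi i j : is_tagged_partition t d n p xi ->
  (i <= j)%N -> (j <= n)%N -> p i <= p j.
Proof.
move=> P ij jn; elim: j ij jn => [|j IH] ij jn; first by rewrite leqn0 in ij; rewrite (eqP ij).
rewrite leq_eqVlt in ij; case/orP: ij => [/eqP -> //|ij].
have [h1 h2 _] := tpart_step P jn.
by apply: le_trans (IH ij (ltnW jn)) _; exact: le_trans h1 h2.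
Qed.

Lemma tpart_tag_range t d n p xi i : is_tagged_partition t d n p xi -> (i < n)%N ->
  0 <= xi i /\ xi i <= t.
Proof.
move=> P iN; case: (P) => p0 pn _; have [h1 h2 _] := tpart_step P iN; split.
  by rewrite -p0; apply: le_trans h1; exact: tpart_mono P (leq0n i) (ltnW iN).
by rewrite -pn; apply: le_trans h2 _; exact: tpart_mono P iN (leqnn n).
Qed.

Lemma tpart_width_ge0 t d n p xi i : is_tagged_partition t d n p xi -> (i < n)%N ->
  0 <= p i.+1 - p i.
Proof. by move=> P iN; have [h1 h2 _] := tpart_step P iN; rewrite subr_ge0 (le_trans h1 h2). Qed.

Lemma tpart_mesh t d d' n p xi : is_tagged_partition t d n p xi -> d <= d' ->
  is_tagged_partition t d' n p xi.
Proof.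
case=> p0 pn H dd; split => // i iN; have [h1 h2 h3] := H i iN; split => //.
exact: lt_le_trans h3 dd.
Qed.

Definition upart n t (i : nat) : R := i%:R * (t / n%:R).

Lemma upart_tpart t d n : 0 <= t -> (0 < n)%N -> t / n%:R < d ->
  is_tagged_partition t d n (upart n t) (upart n t).
Proof.
move=> t0 n0 td; split.
- by rewrite /upart mul0r.
- by rewrite /upart mulrC divfK // pnatr_eq0 -lt0n.
move=> i iN; split => //.
- by rewrite /upart ler_wpM2r ?divr_ge0 // ler_nat.
- by rewrite /upart -mulrBl -natrB // subSnn mul1r.
Qed.

Lemma exists_upart t d : 0 <= t -> 0 < d ->
  exists n, is_tagged_partition t d n (upart n t) (upart n t).
Proof.
move=> t0 d0; have [n Hn] := archi_nat (t / d); exists n.+1.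
apply: upart_tpart => //; rewrite ltr_pdivrMr // mulrC -ltr_pdivrMr //.
by apply: lt_trans Hn _; rewrite ltr_nat.
Qed.

Definition pcat n1 (a : R) p1 p2 (i : nat) : R :=
  if (i <= n1)%N then p1 i else a + p2 (i - n1)%N.

Definition xcat n1 (a : R) xi1 xi2 (i : nat) : R :=
  if (i < n1)%N then xi1 i else a + xi2 (i - n1)%N.

Lemma pcat_shift n1 a p1 p2 j : p1 n1 = a -> p2 0%N = 0 ->
  pcat n1 a p1 p2 (n1 + j)%N = a + p2 j.
Proof.
move=> h1 h2; rewrite /pcat; case: ifP => [|_]; last by rewrite addKn.
by rewrite -{2}[n1]addn0 leq_add2l leqn0 => /eqP ->; rewrite addn0 h1 h2 addr0.
Qed.

Lemma tpart_cat a b d n1 n2 p1 p2 xi1 xi2 :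
  is_tagged_partition a d n1 p1 xi1 -> is_tagged_partition b d n2 p2 xi2 ->
  is_tagged_partition (a + b) d (n1 + n2) (pcat n1 a p1 p2) (xcat n1 a xi1 xi2).
Proof.
move=> P1 P2; case: (P1) => p10 p1n H1; case: (P2) => p20 p2n H2; split.
- by rewrite /pcat leq0n.
- by rewrite pcat_shift // p2n.
move=> i iN; have [iN1|iN1] := ltnP i n1.
  by have [c1 c2 c3] := H1 i iN1; rewrite /pcat /xcat iN1 ltnW // ltnS ltnW.
rewrite -(subnKC iN1); have jn : (i - n1 < n2)%N by rewrite ltn_subLR.
have [c1 c2 c3] := H2 _ jn.
rewrite -addnS !pcat_shift // /xcat ltnNge leq_addr /= addKn.
by split; rewrite ?lerD2l // opprD addrACA subrr add0r.
Qed.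

Lemma Rsum_cat a n1 n2 p1 p2 xi1 xi2 f : p1 n1 = a -> p2 0%N = 0 ->
  Rsum (n1 + n2) (pcat n1 a p1 p2) (xcat n1 a xi1 xi2) f =
  Rsum n1 p1 xi1 f + Rsum n2 p2 xi2 (fun s => f (a + s)).
Proof.
move=> h1 h2; rewrite /Rsum big_split_ord /=; congr (_ + _).
  by apply: eq_bigr => i _; rewrite /pcat /xcat /= ltn_ord (ltnW (ltn_ord i)).
apply: eq_bigr => i _; rewrite /= -addnS !pcat_shift // /xcat ltnNge leq_addr /= addKn.
by rewrite opprD addrACA subrr add0r.
Qed.

Lemma Rsum_ext n p xi f g : (forall s, f s = g s) -> Rsum n p xi f = Rsum n p xi g.
Proof. by move=> E; apply: eq_bigr => i _; rewrite E. Qed.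

Lemma Rsum_lin n p xi (a : C) f g :
  Rsum n p xi (fun s => a * f s + g s) = a * Rsum n p xi f + Rsum n p xi g.
Proof. by rewrite /Rsum mulr_sumr -big_split /=; apply: eq_bigr => i _; ring. Qed.

Lemma Rsum_B n p xi f g :
  Rsum n p xi (fun s => f s - g s) = Rsum n p xi f - Rsum n p xi g.
Proof. by rewrite /Rsum -sumrB; apply: eq_bigr => i _; rewrite mulrBr. Qed.

Lemma Rsum_Z n p xi (c : C) f : Rsum n p xi (fun s => c * f s) = c * Rsum n p xi f.
Proof. by rewrite /Rsum mulr_sumr; apply: eq_bigr => i _; rewrite mulrCA. Qed.

Lemma Rsum_cst n p xi (c : C) : Rsum n p xi (fun _ => c) = (p n - p 0%N)%:C * c.
Proof.
rewrite /Rsum -mulr_suml -(big_mkord xpredT (fun i => (p i.+1 - p i)%:C)).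
by rewrite -rmorph_sum /= telescope_sumr.
Qed.

Lemma Rsum_bound t d n p xi f B : is_tagged_partition t d n p xi ->
  (forall s, 0 <= s -> s <= t -> cnorm (f s) <= B) -> cnorm (Rsum n p xi f) <= t * B.
Proof.
move=> P HB; apply: le_trans (cnorm_sum _ _ _) _.
apply: le_trans (_ : \sum_(i < n) (p i.+1 - p i) * B <= _).
  apply: ler_sum => i _; have w0 := tpart_width_ge0 P (ltn_ord i).
  rewrite cnormM cnormR ger0_norm //; apply: ler_wpM2l => //.
  by have [h1 h2] := tpart_tag_range P (ltn_ord i); apply: HB.
rewrite -mulr_suml -(big_mkord xpredT (fun i => p i.+1 - p i)) telescope_sumr //.
by case: P => -> -> _; rewrite subr0.
Qed.

Lemma cint_Rsum f t I e : is_cint f t I -> 0 < e -> exists d, 0 < d /\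
  forall n p xi, is_tagged_partition t d n p xi -> cnorm (Rsum n p xi f - I) < e.
Proof. by move=> HI; exact: HI. Qed.

Lemma cint_bound f t I B : 0 <= t -> is_cint f t I ->
  (forall s, 0 <= s -> s <= t -> cnorm (f s) <= B) -> cnorm I <= t * B.
Proof.
move=> t0 HI HB; apply/ler_addgt0Pr => e e0.
have [d [d0 Hd]] := HI _ e0; have [n P] := exists_upart t0 d0.
have := Hd _ _ _ P; have := Rsum_bound P HB; rewrite /Rsum; set S := \sum_(i < n) _.
have := cnormD S (I - S); rewrite subrKC (cnorm_distC I).
lra.
Qed.

Lemma cint0 f I : is_cint f 0 I -> I = 0.
Proof.
move=> HI; apply: cnorm_le0; rewrite -(mul0r (cnorm (f 0))).
apply: cint_bound (lexx 0) HI _ => s s0 s_le0.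
by have -> : s = 0 by apply/eqP; rewrite eq_le s_le0 s0.
Qed.

Lemma cint_lin f g t I J (a : C) : is_cint f t I -> is_cint g t J ->
  is_cint (fun s => a * f s + g s) t (a * I + J).
Proof.
move=> HI HJ e e0.
have e2 : 0 < e / 2 by rewrite divr_gt0.
have a1 : 0 < cnorm a + 1 by rewrite ltr_wpDl ?cnorm_ge0.
have [d1 [d10 H1]] := HI _ (divr_gt0 e2 a1); have [d2 [d20 H2]] := HJ _ e2.
exists (Num.min d1 d2); split; first by rewrite lt_min d10 d20.
move=> n p xi P.
have := H1 _ _ _ (tpart_mesh P (ge_minl d1 d2)).
have := H2 _ _ _ (tpart_mesh P (ge_minr d1 d2)).
have := Rsum_lin n p xi a f g; rewrite /Rsum => ->.
set Sg := \sum_(i < n) _; set Sf := \sum_(i < n) _ => h2 h1.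
rewrite (_ : a * Sf + Sg - (a * I + J) = a * (Sf - I) + (Sg - J)); last by ring.
apply: le_lt_trans (cnormD _ _) _; rewrite cnormM.
by have := lt_div_add1_mul (cnorm_ge0 a) e2 h1; lra.
Qed.

Lemma cint_cst0 t : is_cint (fun _ => 0) t 0.
Proof.
move=> e e0; exists 1; split => // n p xi _.
by rewrite big1 ?subrr ?cnorm0 // => i _; rewrite mulr0.
Qed.

Lemma cint_ext f g t I : (forall s, f s = g s) -> is_cint f t I -> is_cint g t I.
Proof. by move=> E; rewrite (_ : f = g) //; apply: funext. Qed.

End RiemannSums.

Lemma cnorm_mulB_le (R : realType) (a b c d : R[i]) (A B : R) :
  cnorm a <= A -> cnorm d <= B -> cnorm (a * b - c * d) <= A * cnorm (b - d) + cnorm (a - c) * B.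
Proof.
move=> aA dB; rewrite (_ : _ - _ = a * (b - d) + (a - c) * d); last by ring.
apply: le_trans (cnormD _ _) _; rewrite !cnormM.
by apply: lerD; [apply: ler_wpM2r | apply: ler_wpM2l]; rewrite ?cnorm_ge0.
Qed.

Section Convolution.
Variable R : realType.
Local Notation C := R[i].
Variables K h k : R -> C.

Lemma Rsum_conv_increment m n p1 xi1 p2 xi2 (t eta : R) :
  p1 0%N = 0 -> p1 m = eta -> p2 0%N = 0 ->
  Rsum (m + n) (pcat m eta p1 p2) (xcat m eta xi1 xi2) (fun s => K (t + eta - s) * h s)
    - Rsum n p2 xi2 (fun s => K (t - s) * h s)
    - eta%:C * (K t * h 0 + Rsum n p2 xi2 (fun s => K (t - s) * k s)) =
  Rsum m p1 xi1 (fun u => K (t + eta - u) * h u - K t * h 0) +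
  Rsum n p2 xi2 (fun s => K (t - s) * (h (eta + s) - h s - eta%:C * k s)).
Proof.
move=> p10 p1m p20.
have shift : Rsum n p2 xi2 (fun s => K (t + eta - (eta + s)) * h (eta + s)) =
    Rsum n p2 xi2 (fun s => K (t - s) * h (eta + s)).
  by apply: Rsum_ext => s; rewrite (_ : t + eta - (eta + s) = t - s) //; ring.
have split : Rsum n p2 xi2 (fun s => K (t - s) * (h (eta + s) - h s - eta%:C * k s)) =
    Rsum n p2 xi2 (fun s => K (t - s) * h (eta + s)) - Rsum n p2 xi2 (fun s => K (t - s) * h s)
    - eta%:C * Rsum n p2 xi2 (fun s => K (t - s) * k s).
  by rewrite -Rsum_Z -!Rsum_B; apply: Rsum_ext => s; ring.
by rewrite Rsum_cat // shift Rsum_B Rsum_cst p1m p10 subr0 split; ring.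
Qed.

(* Split the integral over [0, t + eta] at [eta]: the piece over [0, eta] is
   about [eta K(t) h(0)], and the rest is the integral over [0, t] with [h]
   shifted by [eta], which is about [eta] times the integral of [K(t - s) k(s)]. *)
Lemma cint_conv_increment (t eta a b : R) (Fte Ft Gt : C) : 0 <= t -> 0 <= eta ->
  is_cint (fun s => K (t + eta - s) * h s) (t + eta) Fte ->
  is_cint (fun s => K (t - s) * h s) t Ft ->
  is_cint (fun s => K (t - s) * k s) t Gt ->
  (forall u, 0 <= u -> u <= eta -> cnorm (K (t + eta - u) * h u - K t * h 0) <= a) ->
  (forall s, 0 <= s -> s <= t ->
     cnorm (K (t - s) * (h (eta + s) - h s - eta%:C * k s)) <= b) ->
  cnorm (Fte - Ft - eta%:C * (K t * h 0 + Gt)) <= eta * a + t * b.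
Proof.
move=> t0 eta0 HFte HFt HGt head body; apply/ler_addgt0Pr => e e0.
have rho0 : 0 < e / (eta + 3) by rewrite divr_gt0 //; lra.
set rho := e / (eta + 3) in rho0.
have [d1 [d10 H1]] := cint_Rsum HFte rho0.
have [d2 [d20 H2]] := cint_Rsum HFt rho0.
have [d3 [d30 H3]] := cint_Rsum HGt rho0.
have d0 : 0 < Num.min d1 (Num.min d2 d3) by rewrite !lt_min d10 d20 d30.
have [n P] := exists_upart t0 d0; have [m Q] := exists_upart eta0 d0.
have PQ := tpart_cat Q P; rewrite (addrC eta t) in PQ.
have SPQ_near := H1 _ _ _ (tpart_mesh PQ (ge_minl _ _)).
have S_near := H2 _ _ _ (tpart_mesh P (le_trans (ge_minr _ _) (ge_minl _ _))).
have SG_near := H3 _ _ _ (tpart_mesh P (le_trans (ge_minr _ _) (ge_minr _ _))).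
set SPQ := Rsum (m + n) _ _ _ in SPQ_near.
set S := Rsum n _ _ _ in S_near; set SG := Rsum n _ _ _ in SG_near.
have split_le : cnorm (SPQ - S - eta%:C * (K t * h 0 + SG)) <= eta * a + t * b.
  have [Q0 Qm _] := Q; have [P0 _ _] := P.
  rewrite /SPQ /S /SG Rsum_conv_increment //; apply: le_trans (cnormD _ _) _.
  by apply: lerD; [exact: Rsum_bound Q head | exact: Rsum_bound P body].
have -> : Fte - Ft - eta%:C * (K t * h 0 + Gt) =
    (SPQ - S - eta%:C * (K t * h 0 + SG)) - (SPQ - Fte) + (S - Ft) + eta%:C * (SG - Gt).
  by ring.
apply: le_trans (cnormD _ _) _; rewrite cnormM cnormR ger0_norm //.
have := cnormD (SPQ - S - eta%:C * (K t * h 0 + SG) - (SPQ - Fte)) (S - Ft).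
have := cnormD (SPQ - S - eta%:C * (K t * h 0 + SG)) (- (SPQ - Fte)); rewrite cnormN.
have : eta * cnorm (SG - Gt) <= eta * rho by rewrite ler_wpM2l // ltW.
have : rho * (eta + 3) = e by rewrite /rho divfK //; lra.
by lra.
Qed.

Variables F G : R -> C.
Hypothesis cK : ccont_nonneg K.
Hypothesis ch : ccont_nonneg h.
Hypothesis ck : ccont_nonneg k.
Hypothesis dh : is_rderiv h k.
Hypothesis HF : forall t, 0 <= t -> is_cint (fun s => K (t - s) * h s) t (F t).
Hypothesis HG : forall t, 0 <= t -> is_cint (fun s => K (t - s) * k s) t (G t).

Lemma conv_increment_small T eps : 0 <= T -> 0 < eps -> exists del, 0 < del /\
  forall t eta, 0 <= t -> t <= T -> 0 < eta -> eta < del ->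
    cnorm (F (t + eta) - F t - eta%:C * (K t * h 0 + G t)) <= eps * eta.
Proof.
move=> T0 eps0; have T1 : 0 <= T + 1 by lra.
have [BK [BK0 HBK]] := ccont_bounded cK T1.
have [Bh [Bh0 HBh]] := ccont_bounded ch T1.
have eps4 : 0 < eps / 4 by rewrite divr_gt0.
have TBK0 : 0 <= T * BK by rewrite mulr_ge0.
have [dK [dK0 HdK]] := ccont_unif cK T1 (divr_gt0 eps4 (ltr_wpDl Bh0 ltr01)).
have [dh' [dh0 Hdh]] := ccont_unif ch T1 (divr_gt0 eps4 (ltr_wpDl BK0 ltr01)).
have [dk [dk0 Hdk]] := rderiv_unif T1 ch ck dh (divr_gt0 eps4 (ltr_wpDl TBK0 ltr01)).
exists (Num.min 1 (Num.min dK (Num.min dh' dk))); split; first by rewrite !lt_min ltr01 dK0 dh0 dk0.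
move=> t eta t0 tT eta0; rewrite !lt_min => /andP[eta1 /andP[etaK /andP[etah etak]]].
set c := eps / 4 / (T * BK + 1); set b := BK * (c * eta).
have teta0 : 0 <= t + eta by lra.
apply: le_trans (cint_conv_increment (a := eps / 2) (b := b) t0 (ltW eta0)
  (HF teta0) (HF t0) (HG t0) _ _) _.
- move=> u u0 ue.
  have K_le : cnorm (K (t + eta - u)) <= BK by apply: HBK; lra.
  have h0_le : cnorm (h 0) <= Bh by apply: HBh; lra.
  apply: le_trans (cnorm_mulB_le _ _ K_le h0_le) _.
  have h_near : cnorm (h u - h 0) <= eps / 4 / (BK + 1).
    by apply: ltW; apply: Hdh; rewrite ?subr0 ?ger0_norm //; lra.
  have K_near : cnorm (K (t + eta - u) - K t) <= eps / 4 / (Bh + 1).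
    apply: ltW; apply: HdK; try lra.
    have -> : t + eta - u - t = eta - u by ring.
    by rewrite ger0_norm; lra.
  have := le_div_add1_mul BK0 (ltW eps4) h_near.
  have := le_div_add1_mul Bh0 (ltW eps4) K_near; rewrite mulrC.
  by lra.
- move=> s s0 st; rewrite cnormM; apply: ler_pM; rewrite ?cnorm_ge0 //; first by apply: HBK; lra.
  by rewrite (addrC eta); apply: Hdk; lra.
have c0 : 0 <= c by apply: divr_ge0; [exact: ltW | lra].
have : t * b <= eps / 4 * eta.
  rewrite /b (_ : t * (BK * (c * eta)) = t * BK * c * eta); last by ring.
  apply: ler_wpM2r; first exact: ltW.
  apply: le_trans (le_div_add1_mul TBK0 (ltW eps4) (lexx c)).
  by apply: ler_wpM2r => //; exact: ler_wpM2r.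
by nra.
Qed.

Lemma conv_rderiv : is_rderiv F (fun t => K t * h 0 + G t).
Proof.
move=> t t0 e e0; have e2 : 0 < e / 2 by rewrite divr_gt0.
have [del [del0 Hd]] := conv_increment_small t0 e2.
exists del; split => // eta eta0 etad.
have := Hd t eta t0 (lexx t) eta0 etad; set D := K t * h 0 + G t.
rewrite (_ : (eta^-1)%:C * (F (t + eta) - F t) - D =
    (eta^-1)%:C * (F (t + eta) - F t - eta%:C * D)); last first.
  by rewrite [RHS]mulrBr [in RHS]mulrA -rmorphM mulVf ?gt_eqF // mul1r.
rewrite cnormM cnormR ger0_norm ?invr_ge0 ?(ltW eta0) // => H.
apply: le_lt_trans (ler_wpM2l (_ : 0 <= eta^-1) H) _; first by rewrite invr_ge0 ltW.
by rewrite mulrCA mulVf ?gt_eqF // mulr1; lra.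
Qed.

Lemma conv_cont : ccont_nonneg F.
Proof.
move=> t t0 e e0.
have [BK [BK0 HBK]] := ccont_bounded cK t0.
have [Bh [Bh0 HBh]] := ccont_bounded ch t0.
have [Bk [Bk0 HBk]] := ccont_bounded ck t0.
set BD := BK * Bh + t * (BK * Bk).
have BD0 : 0 <= BD by rewrite addr_ge0 ?mulr_ge0.
have D_le s : 0 <= s -> s <= t -> cnorm (K s * h 0 + G s) <= BD.
  move=> s0 st; apply: le_trans (cnormD _ _) _; apply: lerD.
    by rewrite cnormM; apply: ler_pM; rewrite ?cnorm_ge0 ?HBK ?HBh ?lexx.
  apply: le_trans (_ : s * (BK * Bk) <= _); last by rewrite ler_wpM2r ?mulr_ge0.
  apply: cint_bound s0 (HG s0) _ => u u0 us.
  by rewrite cnormM; apply: ler_pM; rewrite ?cnorm_ge0 ?HBK ?HBk //; lra.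
have [del [del0 Hd]] := conv_increment_small t0 ltr01.
have step a eta : 0 <= a -> a <= t -> 0 < eta -> eta < del ->
    cnorm (F (a + eta) - F a) <= eta * (1 + BD).
  move=> a0 at' eta0 etad; have := Hd a eta a0 at' eta0 etad.
  set D := K a * h 0 + G a; have := D_le a a0 at'.
  have := cnormD (F (a + eta) - F a - eta%:C * D) (eta%:C * D); rewrite subrK.
  rewrite cnormM cnormR ger0_norm ?(ltW eta0) //.
  by move: eta0; nra.
have BD2 : 0 < BD + 2 by lra.
exists (Num.min del (e / (BD + 2))); split; first by rewrite lt_min del0 divr_gt0.
have close a b : 0 <= a -> a <= t -> a < b -> b - a < Num.min del (e / (BD + 2)) ->
    cnorm (F b - F a) < e.
  move=> a0 at' ab; rewrite lt_min ltr_pdivlMr // => /andP[bd be].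
  have := step a (b - a) a0 at'; rewrite subrKC subr_gt0 => /(_ ab bd).
  by move: be ab; nra.
move=> s s0; have [st|ts|<-] := ltgtP s t; last by rewrite !subrr cnorm0.
  by rewrite cnorm_distC distrC gtr0_norm ?subr_gt0 //; apply: close => //; exact: ltW.
by rewrite gtr0_norm ?subr_gt0 //; apply: close.
Qed.

End Convolution.

Section Pairing.
Variable R : realType.
Local Notation C := R[i].
Variable V : lmodType C.
Variable ip : V -> V -> C.
Hypothesis hilbert : is_hilbert ip.
Local Notation hn := (hnorm ip).
Variable U : R -> V -> V.
Hypothesis semigroup : is_C0_semigroup ip U.

Lemma cint_ip_vint (g : R -> V) t J z : is_vint ip g t J ->
  is_cint (fun s => ip (g s) z) t (ip J z).
Proof.
move=> HJ e e0; have [d [d0 Hd]] := HJ _ (divr_gt0 e0 (ltr_wpDl (hnorm_ge0 ip z) ltr01)).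
exists d; split => // n p xi P.
have -> : \sum_(i < n) ((p i.+1 - p i)%:C * ip (g (xi i)) z) =
    ip (\sum_(i < n) ((p i.+1 - p i)%:C *: g (xi i))) z.
  by rewrite (ip_suml hilbert); apply: eq_bigr => i _; rewrite (ipZl hilbert).
by rewrite -(ipBl hilbert); have := cnorm_ip_lt hilbert e0 (Hd n p xi P).
Qed.

Lemma ccont_ip_U x v : ccont_nonneg (fun s => ip (U s x) v).
Proof.
move=> t t0 e e0.
have [d [d0 Hd]] := U_continuous hilbert semigroup x t0 (divr_gt0 e0 (ltr_wpDl (hnorm_ge0 ip v) ltr01)).
exists d; split => // s s0 st.
by rewrite -(ipBl hilbert); have := cnorm_ip_lt hilbert e0 (Hd s s0 st).
Qed.

Lemma rderiv_ip_U x y v : is_gen ip U x y ->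
  is_rderiv (fun s => ip (U s x) v) (fun s => ip (U s y) v).
Proof.
move=> gen t t0 e e0.
have [d [d0 Hd]] := is_gen_U semigroup gen t0 (divr_gt0 e0 (ltr_wpDl (hnorm_ge0 ip v) ltr01)).
exists d; split => // h h0 hd.
rewrite (addrC t) (U_add semigroup _ (ltW h0) t0).
rewrite -(ipBl hilbert) -(ipZl hilbert) -(ipBl hilbert).
by have := cnorm_ip_lt hilbert e0 (Hd h h0 hd).
Qed.

End Pairing.

Section MoriZwanzig.
Variable R : realType.
Local Notation C := R[i].
Variable V : lmodType C.
Variable ip : V -> V -> C.
Variable U : R -> V -> V.
Variables (z Lz Ldz : V) (K : R -> C) (eta : R -> V).
Hypothesis hilbert : is_hilbert ip.
Hypothesis semigroup : is_C0_semigroup ip U.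
Hypothesis gen_z : is_gen ip U z Lz.
Hypothesis adj_z : is_adj_gen ip U z Ldz.
Hypothesis z_neq0 : z != 0.
Hypothesis cK : ccont_nonneg K.
Hypothesis K_eq : forall t, 0 <= t -> exists I : C,
  is_cint (fun s => K (t - s) * ip (U s z) (projQ ip z Ldz) / ip z z) t I /\
  K t = ip (U t (projQ ip z Lz)) (projQ ip z Ldz) / ip z z - I.
Hypothesis eta_eq : forall t, 0 <= t -> exists J : V,
  is_vint ip (fun s => K (t - s) *: U s z) t J /\ eta t = U t (projQ ip z Lz) - J.

Local Notation N := (ip z z).
Local Notation g := (ip Lz z / ip z z).
Local Notation h s := (ip (U s z) z).
Local Notation k s := (ip (U s z) Ldz).
Local Notation QLz := (projQ ip z Lz).
Local Notation QLdz := (projQ ip z Ldz).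
Local Notation F t := (ip (U t QLz) z - ip (eta t) z).
Local Notation G t := (ip (U t QLz) QLdz - N * K t + g * F t).

Lemma N_neq0 : N != 0.
Proof. by apply: contra z_neq0 => /eqP /(ipxx_eq0 hilbert) ->. Qed.

Lemma ip_U_Lz s : 0 <= s -> ip (U s Lz) z = k s.
Proof. by move=> s0; apply: adj_z; have := is_gen_U semigroup gen_z s0. Qed.

Lemma ip_projQ_Ldz v : ip v QLdz = ip v Ldz - g * ip v z.
Proof.
rewrite /projQ /projP (ipBr hilbert) (ipZr hilbert); congr (_ - _ * _).
rewrite rmorphM /= conjc_inv (ipxx hilbert) conjc_real -(ipxx hilbert) -(ipC hilbert).
by rewrite (adj_z gen_z).
Qed.

Lemma ip_U_QLz s v : 0 <= s -> ip (U s QLz) v = ip (U s Lz) v - g * ip (U s z) v.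
Proof.
move=> s0; have lin := U_linear semigroup s0.
by rewrite /projQ /projP (linopB lin) (linopZ lin) (ipBl hilbert) (ipZl hilbert).
Qed.

Lemma rderiv_ip_U_z : is_rderiv (fun s => h s) (fun s => k s).
Proof. exact: rderiv_eq (rderiv_ip_U hilbert semigroup z gen_z) (fun _ _ => erefl) ip_U_Lz. Qed.

Lemma cint_memory t : 0 <= t -> is_cint (fun u => K (t - u) * h u) t (F t).
Proof.
move=> t0; have [J [HJ ->]] := eta_eq t0.
rewrite (ipBl hilbert) opprB addrC subrK.
by apply: cint_ext (cint_ip_vint hilbert z HJ) => u; rewrite (ipZl hilbert).
Qed.

Lemma cint_memory_deriv t : 0 <= t -> is_cint (fun u => K (t - u) * k u) t (G t).
Proof.
move=> t0; have [I [HI EK]] := K_eq t0.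
have := cint_lin N HI (cint_lin g (cint_memory t0) (cint_cst0 t)).
have -> : N * I + (g * F t + 0) = G t by rewrite EK; field; exact: N_neq0.
by apply: cint_ext => u; rewrite ip_projQ_Ldz; field; exact: N_neq0.
Qed.

Lemma ccont_ip_eta : ccont_nonneg (fun t => ip (eta t) z).
Proof.
have cF := conv_cont cK (ccont_ip_U hilbert semigroup z z) (ccont_ip_U hilbert semigroup z Ldz)
  rderiv_ip_U_z cint_memory cint_memory_deriv.
apply: ccont_eq (ccont_lin (-1) cF (ccont_ip_U hilbert semigroup QLz z)) _ => t _.
by ring.
Qed.

Lemma rderiv_ip_eta : is_rderiv (fun t => ip (eta t) z) (fun t => g * ip (eta t) z).
Proof.
have dF := conv_rderiv cK (ccont_ip_U hilbert semigroup z z) (ccont_ip_U hilbert semigroup z Ldz)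
  rderiv_ip_U_z cint_memory cint_memory_deriv.
have dQ : is_rderiv (fun t => ip (U t QLz) z) (fun t => ip (U t Lz) Ldz - g * k t).
  apply: rderiv_eq (rderiv_lin (- g) rderiv_ip_U_z (rderiv_ip_U hilbert semigroup Ldz gen_z)) _ _.
    by move=> t t0; rewrite ip_U_QLz // ip_U_Lz //; ring.
  by move=> t t0; ring.
apply: rderiv_eq (rderiv_lin (-1) dF dQ) _ _ => t t0; first by ring.
rewrite (U_at0 semigroup) ip_projQ_Ldz !ip_U_QLz // ip_U_Lz //.
by field; exact: N_neq0.
Qed.

Lemma ip_eta0 : ip (eta 0) z = 0.
Proof.
have := cint0 (cint_memory (lexx 0)); rewrite ip_U_QLz // (U_at0 semigroup) (U_at0 semigroup).
by move/eqP; rewrite subr_eq0 divfK ?N_neq0 // subrr eq_sym => /eqP.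
Qed.

End MoriZwanzig.

Theorem corollary2 (R : realType) (V : lmodType R[i]) (ip : V -> V -> R[i])
  (U : R -> V -> V) (z Lz Ldz : V) (K : R -> R[i]) (eta : R -> V) :
  is_hilbert ip ->
  is_C0_semigroup ip U ->
  is_gen ip U z Lz ->          (* z \in D(L),        L z        = Lz  *)
  is_adj_gen ip U z Ldz ->     (* z \in D(L^dagger), L^dagger z = Ldz *)
  z != 0 ->
  ccont_nonneg K ->
  (forall t, 0 <= t -> exists I : R[i],
      is_cint (fun s => K (t - s) * ip (U s z) (projQ ip z Ldz) / ip z z) t I /\
      K t = ip (U t (projQ ip z Lz)) (projQ ip z Ldz) / ip z z - I) ->
  (forall t, 0 <= t -> exists J : V,
      is_vint ip (fun s => K (t - s) *: U s z) t J /\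
      eta t = U t (projQ ip z Lz) - J) ->
  forall t, 0 <= t -> ip (eta t) z = 0.
Proof.
move=> hilbert semigroup gen_z adj_z z_neq0 cK K_eq eta_eq.
apply: rderiv_linear_eq0.
- exact: ccont_ip_eta hilbert semigroup gen_z adj_z z_neq0 cK K_eq eta_eq.
- exact: rderiv_ip_eta hilbert semigroup gen_z adj_z z_neq0 cK K_eq eta_eq.
- exact: ip_eta0 hilbert semigroup z_neq0 eta_eq.
Qed.
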